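(* Let $A\supset B$ be as in the context. (1) Any $M_{A,B}$-differential is $(A,B)$-equivalent to a quasi-elementary $M_{A,B}$-differential. (2) If $\partial$ is a quasi-elementary $M_{A,B}$-differential, then the set $H(\partial)$ of $\partial$-boundary homologically essential elements coincides with the set of all elements of $P$ that appear in some vector $\partial(x)$ with $x\in X$. (3) If $\partial,\partial_1$ are $(A,B)$-equivalent quasi-elementary $M_{A,B}$-differentials, then for any $x\in X$ and $p\in P$, $\partial(x)$ contains $p$ if and only if $\partial_1(x)$ contains $p$.
   Context: $\mathbb E$ is a field; $A=\{a_1\prec\dots\prec a_N\}$ a finite linearly ordered graded set, $\mathbb E(A)$ the graded vector space with basis $A$. An $M$-differential is a degree $-1$ map $\partial$ with $\partial^2=0$, $\partial(a_i)\in\mathrm{span}\{a_1,\dots,a_{i-1}\}$. For $B\subset A$ with $\partial\mathbb E(B)\subset\mathbb E(B)$, $\partial$ is an $M_{A,B}$-differential; $\partial_B=\partial|_{\mathbb E(B)}$, and $\partial_{A\setminus B}$ is the induced differential on $\mathbb E(A)/\mathbb E(B)$, identified with $\mathbb E(A\setminus B)$ (with induced order and grading); both are $M$-differentials. $(A,B)$-equivalence: $\partial_2=g\partial_1g^{-1}$ with $g$ a graded automorphism preserving every $\mathrm{span}\{a_1,\dots,a_i\}$ and $\mathbb E(B)$. An $M$-differential on an ordered basis is elementary if each basis element is sent to $0$ or to a single basis element, and no two basis elements go to the same basis element. For an $M_{A,B}$-differential $\partial$ with $\partial_B$, $\partial_{A\setminus B}$ elementary: $Q=\{b\in B:\partial_B(b)\neq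 0\}$, $R=\partial_B(Q)$, $P=B\setminus(Q\cup R)$; $Y=\{a\in A\setminus B:\partial_{A\setminus B}(a)\ne0\}$, $Z=\partial_{A\setminus B}(Y)$, $X=(A\setminus B)\setminus(Y\cup Z)$. These sets depend only on the $(A,B)$-equivalence class (by uniqueness of elementary forms), so they are well defined for all differentials in (3). A vector $v=\sum_{a}v_aa$ contains $a$ if $v_a\neq0$. The differential $\partial$ is quasi-elementary if: $\partial_B$ and $\partial_{A\setminus B}$ are elementary; for each $x\in X$, $\partial(x)$ contains at most one element of $P$; if $\partial(x)$ contains $p\in P$ the coefficient is $1$; and each element of $P$ appears in at most one $\partial(x)$, $x\in X$. $\partial$-boundary homologically essential: with $B=\{b_1\prec\dots\prec b_K\}$, $B^k=\{b_1,\dots,b_k\}$, $\iota_*:H_*(\mathbb E(B^k),\partial_B)\to H_*(\mathbb E(B),\partial_B)$ induced by inclusion, $\partial_*$ the connecting map $H_{*+1}(\mathbb E(A),\mathbb E(B),\partial)\to H_*(\mathbb E(B),\partial_B)$, $I_k=\iota_*H_*(\mathbb E(B^k),\partial_B)\cap\operatorname{im}\partial_*$, $I_0=0$; $b_k$ is $\partial$-boundary homologically essential if $I_k\ne I_{k-1}$. *)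

From HB Require Import structures.
From mathcomp Require Import all_boot all_order all_algebra.
Set Implicit Arguments. Unset Strict Implicit. Unset Printing Implicit Defensive.
Import Order.TTheory GRing.Theory Num.Theory.
Local Open Scope ring_scope.

(* A = {a_1 < ... < a_N} is modelled by the ordinals 'I_N with
   their natural order; the grading is deg : 'I_N -> int.
   A linear map of E(A) is a matrix D : 'M[E]_N acting on ROW vectors
   (v |-> v *m D), so that row j of D is the image of the basis vector a_j:
   D j i = coefficient of a_i in D(a_j).  Hence "D(a_j) contains a_i" is
   D j i != 0. *)

Section Defs.
Variables (E : fieldType) (N : nat) (deg : 'I_N -> int) (B : {set 'I_N}).

Definition isM (D : 'M[E]_N) : Prop :=
  [/\ D *m D = 0,
      forall j i : 'I_N, D j i != 0 -> (i < j)%N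
    & forall j i : 'I_N, D j i != 0 -> deg i + 1 = deg j].

Definition isMAB (D : 'M[E]_N) : Prop :=
  isM D /\ forall j i : 'I_N, j \in B -> D j i != 0 -> i \in B.

(* (A,B)-equivalence: D2 = g D1 g^{-1}, with g(v) = v *m G *)
Definition ABequiv (D1 D2 : 'M[E]_N) : Prop :=
  exists G : 'M[E]_N,
    [/\ G \in unitmx,
        forall j i : 'I_N, G j i != 0 -> (i <= j)%N,        (* flags preserved *)
        forall j i : 'I_N, G j i != 0 -> deg i = deg j,
        forall j i : 'I_N, j \in B -> G j i != 0 -> i \in B
      & D2 = invmx G *m D1 *m G].

(* The induced differential on the basis S (S = B: restriction; S = A\B:
   quotient) sends a_j (j in S) to sum_{i in S} D j i a_i. *)
Definition sends_to (D : 'M[E]_N) (S : {set 'I_N}) (j i : 'I_N) : bool :=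
  [forall k in S, D j k == (k == i)%:R].

Definition elem_on (D : 'M[E]_N) (S : {set 'I_N}) : Prop :=
  (forall j, j \in S ->
     (forall i, i \in S -> D j i = 0) \/ (exists2 i, i \in S & sends_to D S j i))
  /\ (forall j1 j2 i, j1 \in S -> j2 \in S -> i \in S ->
        sends_to D S j1 i -> sends_to D S j2 i -> j1 = j2).

Definition srcs (D : 'M[E]_N) (S : {set 'I_N}) : {set 'I_N} :=
  [set j in S | [exists i in S, D j i != 0]].
Definition tgts (D : 'M[E]_N) (S : {set 'I_N}) : {set 'I_N} :=
  [set i in S | [exists j in S, sends_to D S j i]].

Definition Pset (D : 'M[E]_N) : {set 'I_N} := B :\: (srcs D B :|: tgts D B).
Definition Xset (D : 'M[E]_N) : {set 'I_N} :=
  ~: B :\: (srcs D (~: B) :|: tgts D (~: B)).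

Definition quasi_elem (D : 'M[E]_N) : Prop :=
  [/\ elem_on D B, elem_on D (~: B),
      (forall x p1 p2, x \in Xset D -> p1 \in Pset D -> p2 \in Pset D ->
         D x p1 != 0 -> D x p2 != 0 -> p1 = p2),
      (forall x p, x \in Xset D -> p \in Pset D -> D x p != 0 -> D x p = 1)
    & (forall p x1 x2, p \in Pset D -> x1 \in Xset D -> x2 \in Xset D ->
         D x1 p != 0 -> D x2 p != 0 -> x1 = x2)].

(* Homology, via row spaces (mxalgebra).  E(S) is the row space of chiS S. *)
Definition chiS (S : {set 'I_N}) : 'M[E]_N :=
  diag_mx (\row_(i < N) (i \in S)%:R).

(* Preimage in Z(E(B)) of the image of iota_* : H(E(S)) -> H(E(B)) for S in B:
   cycles in E(S) plus boundaries dE(B). *)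
Definition iota_im (D : 'M[E]_N) (S : {set 'I_N}) : 'M[E]_N :=
  ((kermx D :&: chiS S) + chiS B *m D)%MS.
(* Preimage in Z(E(B)) of im of the connecting map: E(B) /\ dE(A). *)
Definition conn_im (D : 'M[E]_N) : 'M[E]_N := (D :&: chiS B)%MS.
(* Preimage of I_k (with S = B^k) *)
Definition Ispace (D : 'M[E]_N) (S : {set 'I_N}) : 'M[E]_N :=
  (iota_im D S :&: conn_im D)%MS.

(* b = b_k in B is boundary homologically essential iff I_k <> I_{k-1};
   B^k = {c in B | c <= b_k}, B^{k-1} = {c in B | c < b_k}. *)
Definition essential (D : 'M[E]_N) (b : 'I_N) : bool :=
  (b \in B) &&
  ~~ (Ispace D [set c in B | (c <= b)%N] == Ispace D [set c in B | (c < b)%N])%MS.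

Definition Hset (D : 'M[E]_N) : {set 'I_N} := [set b | essential D b].

End Defs.

From HB Require Import structures.
From mathcomp Require Import all_boot all_order all_algebra.
From mathcomp Require Import ring.
Set Implicit Arguments. Unset Strict Implicit. Unset Printing Implicit Defensive.
Import Order.TTheory GRing.Theory Num.Theory.
Local Open Scope ring_scope.

(* (1) Conjugating by triangular changes of basis a_m := a * a_m + c * a_l, one
   row at a time, brings first the restriction to E(B), then the quotient
   differential on E(A\B), into elementary form; the same row reduction then
   normalises the block X x P without touching the two diagonal blocks.
   (2) For a quasi-elementary differential the preimage of each I_k in E(B) is
   a coordinate subspace, spanned by the basis vectors of R and of the elements
   of P below b_k that are hit from X; so I_k grows exactly at those elements.
   (3) X, P and the pairing between them are read off from the pivots (last
   nonzero coordinates) of subspaces defined invariantly from the differential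
   (cycles, relative cycles, boundaries, boundaries of relative cycles supported
   on a_1 .. a_k), and triangular changes of basis preserve pivots. *)

Lemma ltn_sum_set (I : finType) (S : {set I}) (f g : I -> nat) i0 :
  (forall i, i \in S -> f i <= g i)%N -> i0 \in S -> (f i0 < g i0)%N ->
  (\sum_(i in S) f i < \sum_(i in S) g i)%N.
Proof.
move=> le_fg i0S lt0; rewrite (bigD1 i0) //= (bigD1 i0 i0S) /= -addSn.
by apply: leq_add => //; apply: leq_sum => i /andP[iS _]; apply: le_fg.
Qed.

Section MatrixFacts.
Variable E : fieldType.

Lemma mulmx_coef_neq0 m n p (A : 'M[E]_(m, n)) (C : 'M[E]_(n, p)) i j :
  (A *m C) i j != 0 -> exists k, A i k != 0 /\ C k j != 0.
Proof.
move=> ACij; have [k /andP[]|none] := pickP (fun k => (A i k != 0) && (C k j != 0)).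
  by exists k.
move: ACij; rewrite mxE big1 ?eqxx // => k _.
by move: (none k) => /negbT; rewrite negb_and !negbK => /orP[]/eqP->; rewrite ?mul0r ?mulr0.
Qed.

Lemma sum_delta_mull n (j : 'I_n) (f : 'I_n -> E) : \sum_t (t == j)%:R * f t = f j.
Proof.
rewrite (bigD1 j) //= eqxx mul1r big1 ?addr0 // => t /negbTE ->; exact: mul0r.
Qed.

Lemma sum_neq0 n (P : pred 'I_n) (f : 'I_n -> E) :
  \sum_(k | P k) f k != 0 -> exists k, P k /\ f k != 0.
Proof.
move=> sum_nz; have [k /andP[]|none] := pickP (fun k => P k && (f k != 0)).
  by exists k.
move: sum_nz; rewrite big1 ?eqxx // => k Pk.
by move: (none k); rewrite /= Pk /= => /negbT; rewrite negbK => /eqP.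
Qed.

Lemma mulmx1_invmx n (A C : 'M[E]_n) : A *m C = 1%:M -> invmx A = C.
Proof.
move=> AC; have [uA _] := mulmx1_unit AC.
by rewrite -[invmx A]mulmx1 -AC mulmxA mulVmx // mul1mx.
Qed.

Lemma eq_nat_neq0 n (i t : 'I_n) : ((i == t)%:R : E) != 0 -> i = t.
Proof. by case: (eqVneq i t) => // _; rewrite eqxx. Qed.

Lemma eqmx_eq_congr m1 m2 m1' m2' n (A : 'M[E]_(m1, n)) (A' : 'M[E]_(m1', n))
    (C : 'M[E]_(m2, n)) (C' : 'M[E]_(m2', n)) :
  (A :=: A')%MS -> (C :=: C')%MS -> (A == C)%MS = (A' == C')%MS.
Proof.
move=> eA eC; apply/eqmxP/eqmxP => e.
  exact: eqmx_trans (eqmx_sym eA) (eqmx_trans e eC).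
exact: eqmx_trans eA (eqmx_trans e (eqmx_sym eC)).
Qed.

End MatrixFacts.

Section Differentials.
Variables (E : fieldType) (N : nat) (deg : 'I_N -> int) (B : {set 'I_N}).
Implicit Types (D G H : 'M[E]_N) (i j k l m : 'I_N) (a c : E) (S : {set 'I_N}) (u v w : 'rV[E]_N).
Local Notation unitv t := (delta_mx 0 t : 'rV[E]_N).

Definition ABmap G := [/\ forall j i, G j i != 0 -> (i <= j)%N,
   forall j i, G j i != 0 -> deg i = deg j &
   forall j i, j \in B -> G j i != 0 -> i \in B].

Lemma ABmap1 : ABmap 1%:M.
Proof.
by split=> j i; rewrite mxE; case: (eqVneq j i) => [->|]; rewrite ?eqxx.
Qed.

Lemma ABmapM G1 G2 : ABmap G1 -> ABmap G2 -> ABmap (G1 *m G2).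
Proof.
case=> tri1 deg1 B1 [tri2 deg2 B2]; split=> j i.
- by case/mulmx_coef_neq0=> k [/tri1 ki /tri2 ik]; apply: leq_trans ik ki.
- by case/mulmx_coef_neq0=> k [/deg1 <- /deg2].
- by move=> jB; case/mulmx_coef_neq0=> k [/(B1 _ _ jB) kB /(B2 _ _ kB)].
Qed.

Lemma ABequiv_refl D : ABequiv deg B D D.
Proof.
exists 1%:M; have [? ? ?] := ABmap1; split=> //; first exact: unitmx1.
by rewrite invmx1 mul1mx mulmx1.
Qed.

Lemma ABequiv_trans D1 D2 D3 :
  ABequiv deg B D1 D2 -> ABequiv deg B D2 D3 -> ABequiv deg B D1 D3.
Proof.
case=> G1 [u1 tri1 deg1 B1 ->] [G2 [u2 tri2 deg2 B2 ->]].
have [tri deg12 B12] : ABmap (G1 *m G2) by apply: ABmapM.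
exists (G1 *m G2); split=> //; first by rewrite unitmx_mul u1 u2.
have -> : invmx (G1 *m G2) = invmx G2 *m invmx G1.
  by apply: mulmx1_invmx; rewrite mulmxA -(mulmxA G1) mulmxV // mulmx1 mulmxV.
by rewrite !mulmxA.
Qed.

Lemma ABequiv_conj D H G : ABmap G -> H *m G = 1%:M -> ABequiv deg B D (H *m D *m G).
Proof.
move=> [tri degG BG] HG; have [_ uG] := mulmx1_unit HG.
exists G; split=> //.
by rewrite -(mulmx1_invmx (mulmx1C HG)).
Qed.

Lemma isMAB_conj D H G : isMAB deg B D -> ABmap H -> ABmap G -> G *m H = 1%:M ->
  isMAB deg B (H *m D *m G).
Proof.
move=> [[D2 triD degD] BD] [triH degH BH] [triG degG BG] GH; split; first split.
- by rewrite !mulmxA -(mulmxA _ G H) GH mulmx1 -(mulmxA H D D) D2 mulmx0 !mul0mx.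
- move=> j i /mulmx_coef_neq0 [l [/mulmx_coef_neq0 [k [/triH ? /triD ?]] /triG ?]].
  by apply: (@leq_ltn_trans l) => //; apply: (@leq_trans k).
- by move=> j i /mulmx_coef_neq0 [l [/mulmx_coef_neq0 [k [/degH <- /degD <-]] /degG ->]].
- move=> j i jB /mulmx_coef_neq0 [l [/mulmx_coef_neq0 [k [/(BH _ _ jB) kB]]]].
  by move=> /(BD _ _ kB) lB /(BG _ _ lB).
Qed.

Lemma isMAB_lt D j i : isMAB deg B D -> D j i != 0 -> (i < j)%N.
Proof. by move=> [[_ tri _] _] /tri. Qed.

Lemma isMAB_deg D j i : isMAB deg B D -> D j i != 0 -> deg i + 1 = deg j.
Proof. by move=> [[_ _ degD] _] /degD. Qed.

Lemma isMAB_B D j i : isMAB deg B D -> j \in B -> D j i != 0 -> i \in B.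
Proof. by move=> [_ BD]; apply: BD. Qed.

Lemma isMAB_eq0 D j i : isMAB deg B D -> (j <= i)%N -> D j i = 0.
Proof.
by move=> MD ji; apply/eqP; apply: contraTT ji => /(isMAB_lt MD); rewrite -ltnNge.
Qed.

Lemma isMAB_sqr D j i : isMAB deg B D -> \sum_k D j k * D k i = 0.
Proof. by move=> [[D2 _ _] _]; move/matrixP: D2 => /(_ j i); rewrite !mxE. Qed.

(* Row m of rowop m a c l is a e_m + c e_l: the change of basis
   a_m := a * a_m + c * a_l, in which the differential becomes conj_rowop. *)
Definition rowop m a c l : 'M[E]_N :=
  \matrix_(j, k) if j == m then a * (k == m)%:R + c * (k == l)%:R else (j == k)%:R.

Lemma rowop_mull m a c l (M : 'M[E]_N) j i :
  (rowop m a c l *m M) j i = if j == m then a * M m i + c * M l i else M j i.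
Proof.
rewrite mxE; under eq_bigr do rewrite mxE.
case: eqP => _; last by under eq_bigr do rewrite eq_sym; rewrite sum_delta_mull.
under eq_bigr do rewrite mulrDl -!mulrA.
by rewrite big_split /= -!mulr_sumr !sum_delta_mull.
Qed.

Lemma rowop_mulr m a c l (M : 'M[E]_N) j i :
  (M *m rowop m a c l) j i =
  M j i + M j m * (a * (i == m)%:R + c * (i == l)%:R - (m == i)%:R).
Proof.
rewrite mxE; under eq_bigr => k _ do rewrite mxE.
set d := _ - _.
transitivity (\sum_k ((k == i)%:R * M j k + (k == m)%:R * (M j m * d))).
  apply: eq_bigr => k _; case: (eqVneq k m) => [->|_]; last by rewrite mul0r addr0 mulrC.
  by rewrite /d (eq_sym i m) mul1r; case: (m == i) => /=; ring.
by rewrite big_split /= !sum_delta_mull.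
Qed.

Lemma rowopK m a c l a' c' : a * a' = 1 -> a * c' + c = 0 ->
  (l = m -> c = 0 /\ c' = 0) -> rowop m a c l *m rowop m a' c' l = 1%:M.
Proof.
move=> aa' ac' lm; apply/matrixP => j i; rewrite rowop_mull !mxE.
case: (eqVneq j m) => [->|//]; rewrite eqxx (eq_sym m i).
case: (eqVneq l m) => [/lm[-> ->]|_]; first by rewrite !mul0r !addr0 mulrA aa' mul1r.
rewrite (eq_sym l i) mulrDr mulrA aa' -addrA mulrA -mulrDl ac'; ring.
Qed.

Definition shear_ok m c l :=
  c != 0 -> [/\ (l < m)%N, deg l = deg m & (m \in B -> l \in B)].

Definition rowop_ok m a c l := a != 0 /\ shear_ok m c l.

Definition conj_rowop D m a c l := rowop m a c l *m D *m rowop m a^-1 (- c / a) l.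

Lemma ABmap_rowop m a c l : shear_ok m c l -> ABmap (rowop m a c l).
Proof.
move=> sh; have entry j k : rowop m a c l j k != 0 -> [\/ j = k, (j == m) && (k == m) |
    [/\ j = m, k = l & c != 0]].
  rewrite mxE; case: (eqVneq j m) => [->|_].
    2: by case: (eqVneq j k) => [->|]; rewrite ?eqxx // => _; apply: Or31.
  case: (eqVneq k m) => [->|km]; first by move=> _; apply: Or32.
  rewrite mulr0 add0r; case: (eqVneq k l) => [->|]; last by rewrite mulr0 eqxx.
  by rewrite mulr1 => c0; apply: Or33.
split=> [j k|j k|j k jB] /entry[<-|/andP[/eqP jm /eqP->]|[jm -> /sh[/ltnW lm degl Bl]]];
  first [done | by rewrite jm | by rewrite -jm | by apply: Bl; rewrite -jm].
Qed.

Lemma shear_ok_inv m a c l : shear_ok m c l -> shear_ok m (- c / a) l.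
Proof. by move=> sh ca0; apply: sh; apply: contraNneq ca0 => ->; rewrite oppr0 mul0r. Qed.

Lemma rowop_inv m a c l : rowop_ok m a c l ->
  rowop m a c l *m rowop m a^-1 (- c / a) l = 1%:M.
Proof.
case=> a0 sh; apply: rowopK; first by rewrite mulfV.
  by rewrite mulrCA mulfV // mulr1 addNr.
move=> lm; suff c0 : c = 0 by rewrite c0 oppr0 mul0r.
by apply/eqP; apply: contraT => /sh[]; rewrite lm ltnn.
Qed.

Lemma conj_rowop_equiv D m a c l : rowop_ok m a c l ->
  ABequiv deg B D (conj_rowop D m a c l).
Proof.
move=> ok; apply: ABequiv_conj (rowop_inv ok).
by apply: ABmap_rowop; apply: shear_ok_inv; case: ok.
Qed.

Lemma conj_rowop_isMAB D m a c l : rowop_ok m a c l -> isMAB deg B D ->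
  isMAB deg B (conj_rowop D m a c l).
Proof.
move=> [a0 sh] MD; apply: isMAB_conj => //; first exact: ABmap_rowop.
  exact/ABmap_rowop/shear_ok_inv.
exact/mulmx1C/rowop_inv.
Qed.

Section ConjRowop.
Variables (D : 'M[E]_N) (m : 'I_N) (a c : E) (l : 'I_N).
Hypothesis ok : rowop_ok m a c l.

Lemma conj_rowopE j i : j != m -> conj_rowop D m a c l j i =
  D j i + D j m * (a^-1 * (i == m)%:R + (- c / a) * (i == l)%:R - (m == i)%:R).
Proof. by move=> jm; rewrite /conj_rowop rowop_mulr !rowop_mull (negbTE jm). Qed.

Lemma conj_rowop_row i : isMAB deg B D ->
  conj_rowop D m a c l m i = a * D m i + c * D l i.
Proof.
move=> MD; rewrite /conj_rowop rowop_mulr !rowop_mull eqxx (isMAB_eq0 MD (leqnn m)).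
suff -> : c * D l m = 0 by rewrite mulr0 add0r mul0r addr0.
have [->|/ok.2[lm _ _]] := eqVneq c 0; first by rewrite mul0r.
by rewrite (isMAB_eq0 MD (ltnW lm)) mulr0.
Qed.

Lemma conj_rowop_id j i : j != m -> D j m = 0 -> conj_rowop D m a c l j i = D j i.
Proof. by move=> jm Djm; rewrite conj_rowopE // Djm mul0r addr0. Qed.

Lemma conj_rowop_off j i : j != m -> i != m -> i != l -> conj_rowop D m a c l j i = D j i.
Proof.
move=> jm im il; rewrite conj_rowopE // (negbTE im) (negbTE il) eq_sym (negbTE im).
by rewrite !mulr0 subr0 addr0 mulr0 addr0.
Qed.

Lemma conj_rowop_colm j : j != m -> conj_rowop D m a c l j m = D j m / a.
Proof.
move=> jm; rewrite conj_rowopE // eqxx mulr1.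
have -> : - c / a * (m == l)%:R = 0.
  have [lm|//] := eqVneq l m; last by rewrite mulr0.
  by have [-> |/ok.2[]] := eqVneq c 0; [rewrite oppr0 !mul0r | rewrite lm ltnn].
by rewrite addr0 mulrBr mulr1 addrC subrK.
Qed.

Lemma conj_rowop_coll j : j != m -> l != m ->
  conj_rowop D m a c l j l = D j l - D j m * (c / a).
Proof.
move=> jm lm; rewrite conj_rowopE // (negbTE lm) eqxx eq_sym (negbTE lm).
by rewrite mulr0 add0r subr0 mulr1 mulNr mulrN.
Qed.

End ConjRowop.

Lemma sends_toP D S j i :
  reflect (forall i', i' \in S -> D j i' = (i' == i)%:R) (sends_to D S j i).
Proof.
apply: (iffP forallP) => [h i' i'S | h i']; first by move: (h i'); rewrite i'S => /eqP.
by apply/implyP => i'S; rewrite h.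
Qed.

Lemma sends_to1 D S j i : sends_to D S j i -> i \in S -> D j i = 1.
Proof. by move=> /sends_toP h iS; rewrite h ?eqxx. Qed.

Lemma sends_to_ext D D' S j i : (forall i', i' \in S -> D' j i' = D j i') ->
  sends_to D S j i -> sends_to D' S j i.
Proof. by move=> eqD /sends_toP h; apply/sends_toP => i' i'S; rewrite eqD ?h. Qed.

Definition entry_weight (x : E) : nat := (x != 0) + ((x != 0) && (x != 1)).

Lemma entry_weight0 : entry_weight 0 = 0%N.
Proof. by rewrite /entry_weight eqxx. Qed.

Lemma entry_weight1 : entry_weight 1 = 1%N.
Proof. by rewrite /entry_weight oner_eq0 eqxx. Qed.

Lemma entry_weight_gt0 x : x != 0 -> (0 < entry_weight x)%N.
Proof. by rewrite /entry_weight => ->. Qed.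

Lemma entry_weight_gt1 x : x != 0 -> x != 1 -> (1 < entry_weight x)%N.
Proof. by rewrite /entry_weight => -> ->. Qed.

(* Rows k in Srow are reduced in increasing order, on the columns Scol, to zero
   or to a unit vector hit by no earlier row; every conjugation step lowers
   row_weight k. *)
Section RowReduction.
Variables (Srow Scol : {set 'I_N}) (fixed : rel 'I_N) (D0 : 'M[E]_N).

Definition reduced_upto (k : nat) D :=
  (forall j, j \in Srow -> (j < k)%N ->
     (forall i, i \in Scol -> D j i = 0) \/ (exists2 i, i \in Scol & sends_to D Scol j i)) /\
  (forall j1 j2 i, j1 \in Srow -> j2 \in Srow -> i \in Scol -> (j1 < k)%N -> (j2 < k)%N ->
     sends_to D Scol j1 i -> sends_to D Scol j2 i -> j1 = j2).

Definition agrees_on_fixed D := forall j i, fixed j i -> D j i = D0 j i.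

Definition normal_upto (k : nat) D :=
  [/\ isMAB deg B D, ABequiv deg B D0 D, agrees_on_fixed D & reduced_upto k D].

Definition is_target (k : nat) D i := [exists j in Srow, (j < k)%N && sends_to D Scol j i].

Definition row_weight k D := (\sum_(i in Scol) entry_weight (D k i))%N.

Lemma reduced_upto_ext (k : nat) D D' :
  (forall j i, j \in Srow -> (j < k)%N -> i \in Scol -> D' j i = D j i) ->
  reduced_upto k D -> reduced_upto k D'.
Proof.
move=> eqD [rowD injD]; split=> [j jS jk | j1 j2 i j1S j2S iS j1k j2k s1 s2].
  case: (rowD j jS jk) => [z|[i iS si]]; first by left=> i iS; rewrite eqD ?z.
  by right; exists i => //; apply: sends_to_ext si => i' i'S; rewrite eqD.
by apply: (injD j1 j2 i) => //; apply: sends_to_ext (_ : sends_to D' Scol _ i) => // i' i'S;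
  rewrite eqD.
Qed.

Lemma reduced_upto_succ k D :
  reduced_upto k D ->
  ((forall i, i \in Scol -> D k i = 0) \/
   exists2 m, m \in Scol & sends_to D Scol k m /\ ~~ is_target k D m) ->
  reduced_upto k.+1 D.
Proof.
move=> [rowD injD] rowk.
have ltS j : (j < k.+1)%N -> j = k \/ (j < k)%N.
  by rewrite ltnS leq_eqVlt => /orP[/eqP/val_inj|]; [left|right].
have fresh j i : j \in Srow -> i \in Scol -> (j < k)%N ->
    sends_to D Scol k i -> ~~ sends_to D Scol j i.
  move=> jS iS jk /sends_to1/(_ iS) Dki; case: rowk => [z|[m mS [/sends_toP sm notT]]].
    by move: Dki; rewrite z // => /eqP; rewrite eq_sym oner_eq0.
  have im : i = m by apply: (@eq_nat_neq0 E); rewrite -sm // Dki oner_neq0.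
  by apply: contra notT; rewrite im => sj; apply/existsP; exists j; rewrite jS jk.
split=> [j jS /ltS[->|]|j1 j2 i j1S j2S iS /ltS[->|l1] /ltS[->|l2] s1 s2].
- by case: rowk => [z|[m mS [sm _]]]; [left | right; exists m].
- exact: rowD.
- by [].
- by have := fresh j2 i j2S iS l2 s1; rewrite s2.
- by have := fresh j1 i j1S iS l1 s2; rewrite s1.
- exact: (injD j1 j2 i).
Qed.

Lemma reduced_upto_skip k D : k \notin Srow -> reduced_upto k D -> reduced_upto k.+1 D.
Proof.
move=> kS [rowD injD].
have ltS j : j \in Srow -> (j < k.+1)%N -> (j < k)%N.
  rewrite ltnS leq_eqVlt => jS /orP[/eqP/val_inj jk|//].
  by move: kS; rewrite -jk jS.
split=> [j jS /(ltS _ jS)|j1 j2 i j1S j2S iS /(ltS _ j1S) ? /(ltS _ j2S) ?]; first exact: rowD.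
exact: injD.
Qed.

Lemma not_target_col0 (k : nat) D m : reduced_upto k D -> m \in Scol -> ~~ is_target k D m ->
  forall j, j \in Srow -> (j < k)%N -> D j m = 0.
Proof.
move=> [rowD _] mS notT j jS jk; case: (rowD j jS jk) => [z|[t tS st]]; first exact: z.
have /sends_toP -> // := st; case: eqP => // mt; case/negP: notT.
by apply/existsP; exists j; rewrite jS jk mt.
Qed.

Hypothesis Srow_B : forall m l, m \in Srow -> l \in Srow -> m \in B -> l \in B.
Hypothesis Scol_B : forall m l, m \in Scol -> l \in Scol -> m \in B -> l \in B.
Hypothesis no_source : forall D (k : 'I_N) i,
  isMAB deg B D -> agrees_on_fixed D -> reduced_upto k D ->
  k \in Srow -> i \in Scol -> D k i != 0 -> forall i', i' \in Scol -> D i i' = 0.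
Hypothesis conj_rowop_fixed : forall D m a c l,
  isMAB deg B D -> agrees_on_fixed D -> rowop_ok m a c l ->
  (m \in Srow) && (l \in Srow) || (m \in Scol) && (l \in Scol) ->
  forall j i, fixed j i -> conj_rowop D m a c l j i = D j i.

Lemma normal_upto_conj (k : nat) D m a c l : normal_upto k D -> rowop_ok m a c l ->
  (m \in Srow) && (l \in Srow) || (m \in Scol) && (l \in Scol) ->
  (forall j i, j \in Srow -> (j < k)%N -> i \in Scol -> conj_rowop D m a c l j i = D j i) ->
  normal_upto k (conj_rowop D m a c l).
Proof.
move=> [MD eqD fixD redD] ok ml rows; split.
- exact: conj_rowop_isMAB.
- exact: ABequiv_trans eqD (conj_rowop_equiv _ ok).
- by move=> j i ji; rewrite conj_rowop_fixed // fixD.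
- exact: reduced_upto_ext redD.
Qed.

Section Step.
Variables (D : 'M[E]_N) (k : 'I_N).
Hypotheses (normD : normal_upto k D) (kS : k \in Srow).

Lemma clear_target i j : i \in Scol -> D k i != 0 -> j \in Srow -> (j < k)%N ->
  sends_to D Scol j i ->
  exists2 D', normal_upto k D' & (row_weight k D' < row_weight k D)%N.
Proof.
move=> iS Dki jS jk sji; have [MD _ _ _] := normD.
have /sends_toP sj := sji; have Dji : D j i != 0 by rewrite sj ?eqxx ?oner_eq0.
have ok : rowop_ok k 1 (- D k i) j.
  split=> [|_]; first exact: oner_neq0.
  by split=> //; [rewrite -(isMAB_deg MD Dji) (isMAB_deg MD Dki) | apply: Srow_B].
have rowk i' : i' \in Scol ->
    conj_rowop D k 1 (- D k i) j k i' = D k i' - D k i * (i' == i)%:R.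
  by move=> i'S; rewrite conj_rowop_row // mul1r mulNr sj.
exists (conj_rowop D k 1 (- D k i) j).
  apply: normal_upto_conj => //; first by rewrite kS jS.
  move=> j' i' _ j'k _; apply: conj_rowop_id => //; first by rewrite neq_ltn j'k.
  exact: isMAB_eq0 MD (ltnW j'k).
apply: (ltn_sum_set (i0 := i)) => // [i' i'S|]; rewrite rowk //.
  by case: eqP => [->|]; rewrite ?mulr1 ?subrr ?entry_weight0 // mulr0 subr0.
by rewrite eqxx mulr1 subrr entry_weight0 entry_weight_gt0.
Qed.

Lemma conj_rowop_at_source m a c l : m \in Scol -> l \in Scol -> D k m != 0 ->
  (c != 0 -> D k l != 0) -> ~~ is_target k D m -> rowop_ok m a c l ->
  normal_upto k (conj_rowop D m a c l).
Proof.
have [MD _ fixD redD] := normD.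
move=> mS lS Dkm Dkl notT ok; apply: normal_upto_conj => //; first by rewrite mS lS orbT.
move=> j i jS jk iS; have [->|jm] := eqVneq j m; last first.
  by apply: conj_rowop_id => //; apply: not_target_col0 redD mS notT j jS jk.
rewrite conj_rowop_row // (no_source MD fixD redD kS mS Dkm iS) mulr0 add0r.
have [->|/Dkl Dkl'] := eqVneq c 0; first by rewrite mul0r.
by rewrite (no_source MD fixD redD kS lS Dkl' iS) mulr0.
Qed.

Lemma clear_pair m l : m \in Scol -> l \in Scol -> (l < m)%N ->
  D k m != 0 -> D k l != 0 -> ~~ is_target k D m ->
  exists2 D', normal_upto k D' & (row_weight k D' < row_weight k D)%N.
Proof.
move=> mS lS lm Dkm Dkl notT; have [MD _ _ _] := normD.
set c := D k l / D k m.
have ok : rowop_ok m 1 c l.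
  split=> [|_]; first exact: oner_neq0.
  by split=> //; [apply: (@addIr _ 1); rewrite (isMAB_deg MD Dkm) (isMAB_deg MD Dkl)
                 | apply: Scol_B].
have km : k != m by rewrite neq_ltn (isMAB_lt MD Dkm) orbT.
have lm' : l != m by rewrite neq_ltn lm.
exists (conj_rowop D m 1 c l); first exact: conj_rowop_at_source.
have Dl0 : conj_rowop D m 1 c l k l = 0.
  by rewrite conj_rowop_coll // divr1 /c mulrCA mulfV // mulr1 subrr.
apply: (ltn_sum_set (i0 := l)) => // [i iS|]; last by rewrite Dl0 entry_weight0 entry_weight_gt0.
have [->|il] := eqVneq i l; first by rewrite Dl0 entry_weight0.
have [->|im] := eqVneq i m; first by rewrite conj_rowop_colm // divr1.
by rewrite conj_rowop_off.
Qed.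

Lemma scale_entry m : m \in Scol -> D k m != 0 -> D k m != 1 ->
  (forall i, i \in Scol -> i != m -> D k i = 0) -> ~~ is_target k D m ->
  exists2 D', normal_upto k D' & (row_weight k D' < row_weight k D)%N.
Proof.
move=> mS Dkm0 Dkm1 only notT; have [MD _ _ _] := normD.
have ok : rowop_ok m (D k m) 0 m by split=> // /eqP.
have km : k != m by rewrite neq_ltn (isMAB_lt MD Dkm0) orbT.
exists (conj_rowop D m (D k m) 0 m); first by apply: conj_rowop_at_source; rewrite ?eqxx.
apply: (ltn_sum_set (i0 := m)) => // [i iS|].
  by have [->|im] := eqVneq i m; [rewrite conj_rowop_colm // mulfV // entry_weight1
    entry_weight_gt0 | rewrite conj_rowop_off].
by rewrite conj_rowop_colm // mulfV // entry_weight1 entry_weight_gt1.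
Qed.

Lemma normal_step :
  (exists D', normal_upto k.+1 D') \/
  (exists2 D', normal_upto k D' & (row_weight k D' < row_weight k D)%N).
Proof.
have [MD eqD fixD redD] := normD.
have [i /and3P[iS Dki /existsP[j /and3P[jS jk sji]]]|noT] :=
  pickP [pred i | [&& i \in Scol, D k i != 0 & is_target k D i]].
  by right; apply: (clear_target iS Dki jS jk sji).
have notT i : i \in Scol -> D k i != 0 -> ~~ is_target k D i.
  by move=> iS Dki; move: (noT i); rewrite /= iS Dki => /negbT.
have [[m l] /and5P[/= mS lS Dkm Dkl lm]|noPair] :=
  pickP [pred ml : 'I_N * 'I_N | [&& ml.1 \in Scol, ml.2 \in Scol, D k ml.1 != 0,
                                      D k ml.2 != 0 & (ml.2 < ml.1)%N]].
  by right; apply: (clear_pair mS lS lm Dkm Dkl (notT m mS Dkm)).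
have [m /andP[mS Dkm]|zero] := pickP [pred i | (i \in Scol) && (D k i != 0)]; last first.
  left; exists D; split=> //; apply: reduced_upto_succ => //; left=> i iS.
  by apply/eqP; move: (zero i); rewrite /= iS => /negbT; rewrite negbK.
have only i : i \in Scol -> i != m -> D k i = 0.
  move=> iS im; apply/eqP; apply: contraNT im => Dki.
  have [il|il|/val_inj -> //] := ltngtP i m.
    by move: (noPair (m, i)); rewrite /= mS iS Dkm Dki il.
  by move: (noPair (i, m)); rewrite /= mS iS Dkm Dki il.
have [Dkm1|Dkm1] := eqVneq (D k m) 1; last first.
  by right; apply: (scale_entry mS Dkm Dkm1 only (notT m mS Dkm)).
left; exists D; split=> //; apply: reduced_upto_succ => //; right; exists m => //.
split; last exact: notT.
by apply/sends_toP => i iS; have [->|im] := eqVneq i m; rewrite ?Dkm1 // only.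
Qed.

End Step.

Lemma normal_upto_succ (k : 'I_N) D : normal_upto k D -> exists D', normal_upto k.+1 D'.
Proof.
have [kS|kS] := boolP (k \in Srow); last first.
  by case=> MD eqD fixD redD; exists D; split=> //; apply: reduced_upto_skip.
elim: {D}(row_weight k D) {-2}D (leqnn (row_weight k D)) => [|n IH] D wD normD;
  case: (normal_step normD kS) => // [[D' normD' lt]].
  by move: (leq_trans lt wD).
by apply: (IH D') => //; rewrite -ltnS; apply: leq_trans lt wD.
Qed.

Lemma row_reduction : isMAB deg B D0 -> exists D, normal_upto N D.
Proof.
move=> MD0; suff reach (k : nat) : (k <= N)%N -> exists D, normal_upto k D by exact: reach.
elim: k => [_|k IH kN]; first by exists D0; split=> //; exact: ABequiv_refl.
have [D normD] := IH (ltnW kN).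
exact: (normal_upto_succ (k := Ordinal kN) normD).
Qed.

End RowReduction.

Lemma reduced_uptoN_sends Srow Scol D j i : reduced_upto Srow Scol N D ->
  j \in Srow -> i \in Scol -> D j i != 0 -> sends_to D Scol j i.
Proof.
move=> [rowD _] jS iS Dji; case: (rowD j jS (ltn_ord j)) => [z|[t tS st]].
  by move: Dji; rewrite z ?eqxx.
by move: Dji; have /sends_toP -> // := st => /eq_nat_neq0 ->.
Qed.

Lemma reduced_uptoN_elem_on S D : reduced_upto S S N D -> elem_on D S.
Proof.
move=> [rowD injD]; split=> [j jS|j1 j2 i j1S j2S iS]; first exact: rowD.
exact: injD.
Qed.

Lemma sends_to_block D D' S j i : (forall i', i' \in S -> D' j i' = D j i') ->
  sends_to D' S j i = sends_to D S j i.
Proof. by move=> eqD; apply/idP/idP; apply: sends_to_ext => i' i'S; rewrite eqD. Qed.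

Section Blocks.
Variables (D D' : 'M[E]_N) (S : {set 'I_N}).
Hypothesis eqD : forall j i, j \in S -> i \in S -> D' j i = D j i.

Lemma srcs_block : srcs D' S = srcs D S.
Proof.
apply/setP => j; rewrite !inE; have [jS|//] := boolP (j \in S).
by apply: eq_existsb => i; have [iS|//] := boolP (i \in S); rewrite eqD.
Qed.

Lemma tgts_block : tgts D' S = tgts D S.
Proof.
apply/setP => i; rewrite !inE; have [iS|//] := boolP (i \in S).
apply: eq_existsb => j; have [jS|//] := boolP (j \in S).
by rewrite (@sends_to_block D) // => i' i'S; rewrite eqD.
Qed.

Lemma elem_on_block : elem_on D S -> elem_on D' S.
Proof.
have eqs j i : j \in S -> sends_to D' S j i = sends_to D S j i.
  by move=> jS; apply: sends_to_block => i' i'S; rewrite eqD.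
move=> [rowD injD]; split=> [j jS|j1 j2 i j1S j2S iS].
  case: (rowD j jS) => [z|[i iS si]]; first by left=> i iS; rewrite eqD ?z.
  by right; exists i; rewrite ?eqs.
by rewrite !eqs //; apply: injD.
Qed.

End Blocks.

Lemma Pset_block D D' : (forall j i, j \in B -> i \in B -> D' j i = D j i) ->
  Pset B D' = Pset B D.
Proof. by move=> eqD; rewrite /Pset (srcs_block eqD) (tgts_block eqD). Qed.

Lemma notB_setC D D' : (forall j i, j \notin B -> i \notin B -> D' j i = D j i) ->
  forall j i, j \in ~: B -> i \in ~: B -> D' j i = D j i.
Proof. by move=> eqD j i; rewrite !inE; apply: eqD. Qed.

Lemma Xset_block D D' : (forall j i, j \notin B -> i \notin B -> D' j i = D j i) ->
  Xset B D' = Xset B D.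
Proof.
by move=> /notB_setC eqD; rewrite /Xset (srcs_block eqD) (tgts_block eqD).
Qed.

Lemma PsetE D p :
  (p \in Pset B D) = [&& p \in B, p \notin srcs D B & p \notin tgts D B].
Proof. by rewrite in_setD in_setU negb_or andbC. Qed.

Lemma XsetE D x :
  (x \in Xset B D) = [&& x \notin B, x \notin srcs D (~: B) & x \notin tgts D (~: B)].
Proof. by rewrite in_setD in_setU negb_or in_setC andbC. Qed.

Lemma Pset_sub D p : p \in Pset B D -> p \in B.
Proof. by rewrite PsetE => /and3P[]. Qed.

Lemma Pset_notR D p : p \in Pset B D -> p \notin tgts D B.
Proof. by rewrite PsetE => /and3P[]. Qed.

Lemma Xset_notB D x : x \in Xset B D -> x \notin B.
Proof. by rewrite XsetE => /and3P[]. Qed.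

Lemma Pset_row0 D p i : isMAB deg B D -> p \in Pset B D -> D p i = 0.
Proof.
move=> MD; rewrite PsetE => /and3P[pB pQ _]; apply/eqP; apply: contraNT pQ => Dpi.
by rewrite inE pB; apply/existsP; exists i; rewrite Dpi (isMAB_B MD pB).
Qed.

Lemma Xset_row0 D x i : x \in Xset B D -> i \notin B -> D x i = 0.
Proof.
rewrite XsetE => /and3P[xB xY _] iB; apply/eqP; apply: contraNT xY => Dxi.
by rewrite inE in_setC xB; apply/existsP; exists i; rewrite in_setC iB.
Qed.

Lemma elem_on_col0 D S j t : elem_on D S -> j \in S -> t \in S -> t \notin tgts D S ->
  D j t = 0.
Proof.
move=> [rowD _] jS tS tT; case: (rowD j jS) => [z|[t' t'S st']]; first exact: z.
have /sends_toP -> // := st'; case: eqP => // tt'; case/negP: tT.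
by rewrite inE tS; apply/existsP; exists j; rewrite jS tt'.
Qed.

Lemma Pset_col0 D j p : elem_on D B -> j \in B -> p \in Pset B D -> D j p = 0.
Proof. by move=> elD jB; rewrite PsetE => /and3P[pB _]; apply: elem_on_col0. Qed.

Lemma Xset_col0 D j x : isMAB deg B D -> elem_on D (~: B) -> x \in Xset B D -> D j x = 0.
Proof.
move=> MD elD xX; have xB := Xset_notB xX.
have [jB|jB] := boolP (j \in B).
  by apply/eqP; apply: contraNT xB => /(isMAB_B MD jB).
by move: xX; rewrite XsetE => /and3P[_ _]; apply: elem_on_col0; rewrite ?inE.
Qed.

Section BlockReduction.
Variable S : {set 'I_N}.
Hypothesis S_B : forall m l, m \in S -> l \in S -> m \in B -> l \in B.
Hypothesis S_no_detour : forall D, isMAB deg B D ->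
  forall j k i, j \in S -> i \in S -> k \notin S -> D j k * D k i = 0.

Lemma block_no_source D k i : isMAB deg B D -> reduced_upto S S k D ->
  k \in S -> i \in S -> D k i != 0 -> forall i', i' \in S -> D i i' = 0.
Proof.
move=> MD [rowD injD] kS iS Dki; have ik := isMAB_lt MD Dki.
case: (rowD i iS ik) => [//|[t tS st]]; exfalso; move/eqP: (isMAB_sqr k t MD).
rewrite (eq_bigr (fun j => (j == i)%:R * D k i)) ?sum_delta_mull ?(negbTE Dki) // => j _.
have [->|ji] := eqVneq j i; first by rewrite (sends_to1 st tS) mulr1 mul1r.
rewrite mul0r; have [jS|jS] := boolP (j \in S); last exact: S_no_detour.
have [->|Dkj] := eqVneq (D k j) 0; first by rewrite mul0r.
have jk := isMAB_lt MD Dkj.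
case: (rowD j jS jk) => [z|[t' t'S st']]; first by rewrite z ?mulr0.
have /sends_toP -> // := st'; case: eqP => [tt'|]; last by rewrite mulr0.
by rewrite -tt' in st'; rewrite (injD j i t) ?eqxx in ji.
Qed.

Lemma block_reduction D0 : isMAB deg B D0 -> exists D,
  [/\ isMAB deg B D, ABequiv deg B D0 D,
      (forall j i, j \notin S -> i \notin S -> D j i = D0 j i) & elem_on D S].
Proof.
move=> MD0; pose fixed := [rel j i | (j \notin S) && (i \notin S)].
suff [D [MD eqD fixD /reduced_uptoN_elem_on elD]] :
    exists D, normal_upto S S fixed D0 N D.
  by exists D; split=> // j i jS iS; apply: fixD; rewrite /= jS.
apply: row_reduction => // [D k i MD _|D m a c l _ _ _ mlS j i /andP[jS iS]].
  exact: block_no_source.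
have /andP[mS lS] : (m \in S) && (l \in S) by case/orP: mlS.
by apply: conj_rowop_off; [move: jS | move: iS | move: iS]; apply: contraNneq => ->.
Qed.

End BlockReduction.

Definition same_block := [rel j i : 'I_N | (j \in B) == (i \in B)].

Section PairingReduction.
Variable D0 : 'M[E]_N.
Hypotheses (MD0 : isMAB deg B D0) (elB0 : elem_on D0 B) (elnB0 : elem_on D0 (~: B)).
Local Notation P := (Pset B D0).
Local Notation X := (Xset B D0).

Lemma same_block_agree D : agrees_on_fixed same_block D0 D ->
  [/\ Pset B D = P, Xset B D = X, elem_on D B & elem_on D (~: B)].
Proof.
move=> agD; have eqB j i : j \in B -> i \in B -> D j i = D0 j i.
  by move=> jB iB; apply: agD; rewrite /= jB iB.
have eqnB j i : j \notin B -> i \notin B -> D j i = D0 j i.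
  by move=> /negbTE jB /negbTE iB; apply: agD; rewrite /= jB iB.
split; [exact: Pset_block | exact: Xset_block | exact: elem_on_block elB0 |].
exact: elem_on_block (notB_setC eqnB) elnB0.
Qed.

Lemma pairing_rowop_fixed D m a c l : isMAB deg B D -> agrees_on_fixed same_block D0 D ->
  rowop_ok m a c l -> (m \in X) && (l \in X) || (m \in P) && (l \in P) ->
  forall j i, same_block j i -> conj_rowop D m a c l j i = D j i.
Proof.
move=> MD /same_block_agree[<- <- elB elnB] ok /orP[]/andP[mS lS] j i /eqP ji.
  case: (eqVneq j m) ji => [->|jm] ji; last first.
    by apply: conj_rowop_id => //; apply: Xset_col0 mS.
  have iB : i \notin B by rewrite -ji; apply: Xset_notB mS.
  by rewrite conj_rowop_row // !(Xset_row0 _ iB) // !mulr0 addr0.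
have [->|jm] := eqVneq j m; first by rewrite conj_rowop_row // !(Pset_row0 _ MD) ?mulr0 ?addr0.
have [jB|jB] := boolP (j \in B); first by apply: conj_rowop_id => //; apply: Pset_col0 mS.
have iB : i \notin B by rewrite -ji.
have mB := Pset_sub mS; have lB := Pset_sub lS.
by apply: conj_rowop_off => //; apply: contraNneq iB => ->.
Qed.

Lemma pairing_reduction : exists D,
  [/\ isMAB deg B D, ABequiv deg B D0 D & quasi_elem B D].
Proof.
suff [D [MD eqD /same_block_agree[PD XD elB elnB] redD]] :
    exists D, normal_upto X P same_block D0 N D.
  have sendsD := reduced_uptoN_sends redD; have [_ injD] := redD.
  exists D; split=> //; split; rewrite ?PD ?XD //.
  - move=> x p1 p2 xX p1P p2P /(sendsD _ _ xX p1P)/sends_toP Dx Dxp2.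
    by apply/esym/(@eq_nat_neq0 E); rewrite -Dx.
  - by move=> x p xX pP /(sendsD _ _ xX pP)/sends_to1; apply.
  - move=> p x1 x2 pP x1X x2X /(sendsD _ _ x1X pP) s1 /(sendsD _ _ x2X pP) s2.
    exact: (injD x1 x2 p).
apply: row_reduction => //.
- by move=> m l /Xset_notB/negbTE->.
- by move=> m l _ /Pset_sub.
- move=> D k i MD /same_block_agree[PD _ _ _] _ _ iP _ i' _.
  by apply: Pset_row0 MD _; rewrite PD.
- exact: pairing_rowop_fixed.
Qed.

End PairingReduction.

Lemma B_no_detour D : isMAB deg B D ->
  forall j k i, j \in B -> i \in B -> k \notin B -> D j k * D k i = 0.
Proof.
move=> MD j k i jB _ kB; have [->|/(isMAB_B MD jB) kB'] := eqVneq (D j k) 0.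
  exact: mul0r.
by rewrite kB' in kB.
Qed.

Lemma notB_no_detour D : isMAB deg B D ->
  forall j k i, j \in ~: B -> i \in ~: B -> k \notin ~: B -> D j k * D k i = 0.
Proof.
move=> MD j k i _; rewrite !inE negbK => iB kB.
have [->|/(isMAB_B MD kB) iB'] := eqVneq (D k i) 0; first exact: mulr0.
by rewrite iB' in iB.
Qed.

Lemma quasi_elementary_form D : isMAB deg B D ->
  exists D', [/\ isMAB deg B D', ABequiv deg B D D' & quasi_elem B D'].
Proof.
move=> MD.
have [D1 [MD1 eq1 _ elB1]] := block_reduction (S := B) (fun _ _ _ lB _ => lB) (@B_no_detour) MD.
have notB_B m l : m \in ~: B -> l \in ~: B -> m \in B -> l \in B.
  by rewrite inE => /negbTE->.
have [D2 [MD2 eq2 fix2 elnB2]] := block_reduction notB_B (@notB_no_detour) MD1.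
have elB2 : elem_on D2 B.
  by apply: elem_on_block elB1 => j i jB iB; apply: fix2; rewrite inE negbK.
have [D3 [MD3 eq3 q3]] := pairing_reduction MD2 elB2 elnB2.
by exists D3; split=> //; apply: ABequiv_trans eq3; apply: ABequiv_trans eq2.
Qed.

Section CoordinateSubspaces.
Implicit Types (T : {set 'I_N}).

Lemma chiSP v T : reflect (forall i, i \notin T -> v 0 i = 0) (v <= chiS E T)%MS.
Proof.
apply: (iffP idP) => [/submxP[a ->] i iT | v0].
  by rewrite /chiS mul_mx_diag !mxE (negbTE iT) mulr0.
suff -> : v = v *m chiS E T by apply: submxMl.
apply/matrixP => r i; rewrite ord1 /chiS mul_mx_diag !mxE.
by have [iT|iT] := boolP (i \in T); rewrite ?mulr1 // v0 ?mul0r.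
Qed.

Lemma unitvE t i : unitv t 0 i = (i == t)%:R.
Proof. by rewrite mxE eqxx. Qed.

Lemma unit_chiS t T : (unitv t <= chiS E T)%MS = (t \in T).
Proof.
apply/chiSP/idP => [/(_ t)|tT i iT]; rewrite unitvE.
  by rewrite eqxx => h; apply: contraT => /h/eqP; rewrite oner_eq0.
by case: eqP => // it; rewrite it tT in iT.
Qed.

Lemma row_chiS T r : row r (chiS E T) = if r \in T then unitv r else 0.
Proof. by rewrite row_diag_mx mxE; case: (r \in T); rewrite ?scale1r ?scale0r. Qed.

Lemma eqmx_chiS n (V : 'M[E]_(n, N)) T :
  (forall v, (v <= V)%MS -> forall i, v 0 i != 0 -> i \in T) ->
  (forall t, t \in T -> (unitv t <= V)%MS) -> (V :=: chiS E T)%MS.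
Proof.
move=> supp unitV; apply/eqmxP/andP; split; apply/row_subP => r.
  apply/chiSP => i iT; apply/eqP; apply: contraNT iT; apply: supp; exact: row_sub.
by rewrite row_chiS; case: ifP => [/unitV|_] //; rewrite sub0mx.
Qed.

Lemma eqmx_chiS_set T1 T2 : (chiS E T1 == chiS E T2)%MS = (T1 == T2).
Proof.
suff sub_chiS T T' : (chiS E T <= chiS E T')%MS = (T \subset T').
  by rewrite eqEsubset !sub_chiS.
apply/row_subP/subsetP => [sTT' t tT|sTT' r].
  by move: (sTT' t); rewrite row_chiS tT unit_chiS.
by rewrite row_chiS; case: ifP => [/sTT'|_]; rewrite ?unit_chiS ?sub0mx.
Qed.

Lemma sub_unitv n (V : 'M[E]_(n, N)) v :
  (forall i, v 0 i != 0 -> (unitv i <= V)%MS) -> (v <= V)%MS.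
Proof.
move=> unitV; rewrite [v]row_sum_delta; apply: summx_sub => i _.
by have [->|/unitV] := eqVneq (v 0 i) 0; [rewrite scale0r sub0mx | apply: scalemx_sub].
Qed.

End CoordinateSubspaces.

Section Pivots.

Definition leading v m := v 0 m != 0 /\ forall i, (m < i)%N -> v 0 i = 0.

Definition is_pivot (V : 'rV[E]_N -> Prop) m := exists2 v, V v & leading v m.

Lemma leading_exists v : v != 0 -> exists m, leading v m.
Proof.
move=> v0; have [i vi|none] := pickP (fun i => v 0 i != 0); last first.
  by case/eqP: v0; apply/rowP => i; move: (none i) => /negbT; rewrite negbK mxE => /eqP.
have [m vm maxm] := @arg_maxnP _ i (fun i => v 0 i != 0) val vi.
exists m; split=> // j mj; apply/eqP; apply: contraT => /maxm.
by rewrite /geq /= leqNgt mj.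
Qed.

Lemma leading_uniq v m m' : leading v m -> leading v m' -> m = m'.
Proof.
move=> [vm zm] [vm' zm']; apply: val_inj; case: (ltngtP m m') => // h.
  by rewrite zm ?eqxx in vm'.
by rewrite zm' ?eqxx in vm.
Qed.

Lemma leading_unitv t : leading (unitv t) t.
Proof.
split=> [|i ti]; rewrite unitvE ?eqxx ?oner_eq0 //.
by case: eqP => // it; rewrite it ltnn in ti.
Qed.

Section Triangular.
Variable G : 'M[E]_N.
Hypotheses (triG : forall j i, G j i != 0 -> (i <= j)%N) (uG : G \in unitmx).

Lemma triangular_diag_neq0 m : G m m != 0.
Proof.
have : is_trig_mx G.
  by apply/is_trig_mxP => i j ij; apply/eqP; apply: contraT => /triG; rewrite leqNgt ij.
by move/det_trig => detG; move: uG; rewrite unitmxE detG unitfE => /prodf_neq0; apply.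
Qed.

Lemma leading_mulmx v m : leading v m -> leading (v *m G) m.
Proof.
move=> [vm zm]; split.
  rewrite mxE (bigD1 m) //= big1 ?addr0 ?mulf_neq0 ?triangular_diag_neq0 // => j jm.
  have [mj|jm'|/val_inj e] := ltngtP m j; first by rewrite zm // mul0r.
    by rewrite (_ : G j m = 0) ?mulr0 //; apply/eqP; apply: contraT => /triG; rewrite leqNgt jm'.
  by rewrite e eqxx in jm.
move=> i mi; apply/eqP; apply: contraT => /mulmx_coef_neq0[j [vj /triG ij]].
have [mj|jm] := ltnP m j; first by rewrite zm ?eqxx in vj.
by have := leq_ltn_trans (leq_trans ij jm) mi; rewrite ltnn.
Qed.

Lemma leading_mulmxV v m : leading (v *m G) m -> leading v m.
Proof.
move=> lvG; have v0 : v != 0.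
  by apply/eqP => v0; case: lvG; rewrite v0 mul0mx mxE eqxx.
have [m' lv] := leading_exists v0.
by rewrite (leading_uniq lvG (leading_mulmx lv)).
Qed.

Lemma is_pivot_mulmx (V V' : 'rV[E]_N -> Prop) :
  (forall w, V' (w *m G) <-> V w) -> forall m, is_pivot V' m <-> is_pivot V m.
Proof.
move=> VV' m; split=> [[v /= V'v lv]|[w Vw lw]].
  exists (v *m invmx G); first by apply/VV'; rewrite mulmxKV.
  by apply: leading_mulmxV; rewrite mulmxKV.
by exists (w *m G); [apply/VV' | apply: leading_mulmx].
Qed.

End Triangular.

Lemma is_pivot_support (V : 'rV[E]_N -> Prop) (T : pred 'I_N) m :
  (forall v, V v -> forall i, v 0 i != 0 -> T i) -> (forall t, T t -> V (unitv t)) ->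
  is_pivot V m <-> T m.
Proof.
move=> supp unitV; split=> [[v Vv [vm _]]|Tm]; first exact: supp Vv m vm.
by exists (unitv m); [apply: unitV | apply: leading_unitv].
Qed.

End Pivots.

Definition prefix_set (k : nat) : {set 'I_N} := [set i : 'I_N | (i < k)%N].

Definition cycle_inB D v := (v <= chiS E B)%MS /\ v *m D = 0.
Definition maps_intoB D v := (v *m D <= chiS E B)%MS.
Definition boundary_plusB D v := exists u w, (w <= chiS E B)%MS /\ v = u *m D + w.
Definition filtered_boundary D (k : nat) v := exists u u',
  [/\ (u <= chiS E (prefix_set k))%MS, (u *m D <= chiS E B)%MS,
      (u' <= chiS E B)%MS & v = u *m D + u' *m D].

Lemma chiS_mulmx_stable G (T : {set 'I_N}) : G \in unitmx ->
  (forall j i, j \in T -> G j i != 0 -> i \in T) ->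
  forall v, (v *m G <= chiS E T)%MS = (v <= chiS E T)%MS.
Proof.
move=> uG GT; have fw v : (v <= chiS E T)%MS -> (v *m G <= chiS E T)%MS.
  move=> /chiSP vT; apply/chiSP => i iT; apply/eqP; apply: contraT.
  case/mulmx_coef_neq0 => j [vj Gji]; have [jT|jT] := boolP (j \in T).
    by rewrite (GT _ _ jT Gji) in iT.
  by rewrite vT ?eqxx in vj.
have sTG : (chiS E T *m G <= chiS E T)%MS.
  by apply/row_subP => j; rewrite row_mul; apply: fw; apply: row_sub.
have sGT : (chiS E T <= chiS E T *m G)%MS.
  by rewrite -(mxrank_leqif_sup sTG).2 mxrankMfree // row_free_unit.
move=> v; apply/idP/idP => [/(submx_trans)/(_ sGT)/submxP[a e]|/fw //].
have fG : row_free G by rewrite row_free_unit.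
have -> : v = a *m chiS E T by apply: (row_free_inj fG); rewrite /= e mulmxA.
exact: submxMl.
Qed.

Section Conjugation.
Variables (G D : 'M[E]_N).
Hypotheses (mapG : ABmap G) (uG : G \in unitmx).
Let fG : row_free G. Proof. by rewrite row_free_unit. Qed.
Local Notation D' := (invmx G *m D *m G).

Lemma conj_mulmx v : (v *m G) *m D' = v *m D *m G.
Proof. by rewrite !mulmxA -(mulmxA v G (invmx G)) mulmxV // mulmx1. Qed.

Lemma chiSB_mulmx v : (v *m G <= chiS E B)%MS = (v <= chiS E B)%MS.
Proof. by apply: chiS_mulmx_stable => //; case: mapG. Qed.

Lemma chiS_prefix_mulmx (k : nat) v :
  (v *m G <= chiS E (prefix_set k))%MS = (v <= chiS E (prefix_set k))%MS.
Proof.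
have [triG _ _] := mapG; apply: chiS_mulmx_stable => // j i; rewrite !inE => jk /triG ij.
exact: leq_ltn_trans ij jk.
Qed.

Lemma cycle_inB_conj w : cycle_inB D' (w *m G) <-> cycle_inB D w.
Proof.
rewrite /cycle_inB conj_mulmx chiSB_mulmx; split=> [[-> wDG]|[-> ->]]; last by rewrite mul0mx.
by split=> //; rewrite -[w *m D](mulmxK uG) wDG mul0mx.
Qed.

Lemma maps_intoB_conj w : maps_intoB D' (w *m G) <-> maps_intoB D w.
Proof. by rewrite /maps_intoB conj_mulmx chiSB_mulmx. Qed.

Lemma boundary_plusB_conj w : boundary_plusB D' (w *m G) <-> boundary_plusB D w.
Proof.
split=> [[u [x [xB e]]]|[u [x [xB ->]]]]; last first.
  by exists (u *m G), (x *m G); rewrite chiSB_mulmx conj_mulmx mulmxDl.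
exists (u *m invmx G), (x *m invmx G); split; first by rewrite -chiSB_mulmx mulmxKV.
apply: (row_free_inj fG).
by rewrite /= e mulmxDl -conj_mulmx !mulmxKV.
Qed.

Lemma filtered_boundary_conj (k : nat) w :
  filtered_boundary D' k (w *m G) <-> filtered_boundary D k w.
Proof.
split=> [[u [u' [uF uB u'B e]]]|[u [u' [uF uB u'B ->]]]]; last first.
  by exists (u *m G), (u' *m G); rewrite chiS_prefix_mulmx !conj_mulmx !chiSB_mulmx mulmxDl.
exists (u *m invmx G), (u' *m invmx G); split.
- by rewrite -chiS_prefix_mulmx mulmxKV.
- by rewrite -chiSB_mulmx -conj_mulmx mulmxKV.
- by rewrite -chiSB_mulmx mulmxKV.
apply: (row_free_inj fG).
by rewrite /= e mulmxDl -!conj_mulmx !mulmxKV.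
Qed.

End Conjugation.

Definition paired D p := [exists x in Xset B D, D x p != 0].

Definition Ispace_support D S :=
  [set i | (i \in tgts D B) || [&& i \in Pset B D, i \in S & paired D i]].

Section QuasiElementary.
Variable D : 'M[E]_N.
Hypotheses (MD : isMAB deg B D) (qD : quasi_elem B D).
Local Notation Q := (srcs D B).
Local Notation R := (tgts D B).
Local Notation Y := (srcs D (~: B)).
Local Notation Z := (tgts D (~: B)).
Local Notation P := (Pset B D).
Local Notation X := (Xset B D).

Let elB : elem_on D B := let: And5 el _ _ _ _ := qD in el.
Let elnB : elem_on D (~: B) := let: And5 _ el _ _ _ := qD in el.

Lemma memR r : r \in R -> r \in B /\ exists2 q, q \in B & sends_to D B q r.
Proof. by rewrite inE => /andP[rB /existsP[q /andP[qB sq]]]; split=> //; exists q. Qed.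

Lemma row_inB j : j \in B ->
  (forall i, D j i = 0) \/ exists2 r, r \in R & forall i, D j i = (i == r)%:R.
Proof.
move=> jB; have outB i : i \notin B -> D j i = 0.
  by move=> iB; apply/eqP; apply: contraNT iB; apply: isMAB_B MD jB.
have [rowB _] := elB; case: (rowB j jB) => [z|[r rB sr]].
  by left=> i; have [/z|/outB] := boolP (i \in B).
right; exists r; first by rewrite inE rB; apply/existsP; exists j; rewrite jB.
move=> i; have [iB|iB] := boolP (i \in B); first by have /sends_toP -> := sr.
by rewrite outB //; case: eqP => // ir; rewrite ir rB in iB.
Qed.

Lemma row_source q r : q \in B -> sends_to D B q r -> r \in B ->
  forall i, D q i = (i == r)%:R.
Proof.
move=> qB sq rB; have Dqr := sends_to1 sq rB.
case: (row_inB qB) => [z|[t _ Dq]]; first by rewrite z in Dqr; case/eqP: (oner_neq0 E).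
suff -> : r = t by [].
by apply: (@eq_nat_neq0 E); rewrite -Dq Dqr oner_neq0.
Qed.

Lemma row_target r i : r \in R -> D r i = 0.
Proof.
move=> /memR[rB [q qB sq]]; case: (row_inB rB) => [->//|[t _ Dr]]; exfalso.
move/eqP: (isMAB_sqr q t MD); apply/negP.
rewrite (eq_bigr (fun k => (k == r)%:R * D r t)) => [|k _]; last first.
  by rewrite (row_source qB sq rB); case: eqP => [->|]; rewrite ?mul0r.
by rewrite sum_delta_mull Dr eqxx oner_eq0.
Qed.

Lemma col_target q r j : q \in B -> sends_to D B q r -> r \in B -> j \in B ->
  D j r = (j == q)%:R.
Proof.
move=> qB sq rB jB; have [rowB injB] := elB.
have [->|jq] := eqVneq j q; first by rewrite (sends_to1 sq rB).
case: (rowB j jB) => [z|[t tB st]]; first by rewrite z.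
have /sends_toP -> // := st; case: eqP => // rt; rewrite -rt in st.
by rewrite (injB j q r) ?eqxx in jq.
Qed.

Lemma coef_Q (w : 'rV[E]_N) q : (forall i, i \notin B -> w 0 i = 0) ->
  w *m D = 0 -> q \in Q -> w 0 q = 0.
Proof.
move=> wB wD; rewrite inE => /andP[qB /existsP[i /andP[iB Dqi]]].
case: (row_inB qB) => [z|[r rR Dq]]; first by rewrite z eqxx in Dqi.
have [rB _] := memR rR.
have sq : sends_to D B q r by apply/sends_toP => i' _; rewrite Dq.
move/matrixP: wD => /(_ 0 r); rewrite !mxE.
rewrite (eq_bigr (fun k => (k == q)%:R * w 0 q)) ?sum_delta_mull // => k _.
have [kB|kB] := boolP (k \in B).
  by rewrite (col_target qB sq rB kB); case: eqP => [->|]; rewrite ?mulr1 ?mul1r ?mulr0 ?mul0r.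
rewrite (wB k kB) mul0r; case: eqP => [kq|]; last by rewrite mul0r.
by rewrite kq qB in kB.
Qed.

Lemma memY y : y \in Y -> y \notin B /\ exists2 z, z \notin B & sends_to D (~: B) y z.
Proof.
rewrite inE in_setC => /andP[yB /existsP[i /andP[iB Dyi]]]; split=> //.
have [rownB _] := elnB; case: (rownB y) => [|z|[z zB sz]]; rewrite ?in_setC //.
  by rewrite z ?eqxx in Dyi.
by exists z; rewrite -?in_setC.
Qed.

Lemma memZ z : z \in Z -> z \notin B /\ exists2 y, y \notin B & sends_to D (~: B) y z.
Proof.
rewrite inE in_setC => /andP[zB /existsP[y /andP[yB sy]]]; split=> //.
by exists y; rewrite -?in_setC.
Qed.

Lemma col_Z y z : y \notin B -> sends_to D (~: B) y z -> z \notin B ->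
  forall j, D j z = (j == y)%:R.
Proof.
move=> yB sy zB j; have [rownB injnB] := elnB.
have [jB|jB] := boolP (j \in B).
  rewrite (_ : (j == y) = false); last by apply: contraNF yB => /eqP <-.
  by apply/eqP; apply: contraNT zB; apply: isMAB_B MD jB.
have [->|jy] := eqVneq j y; first by rewrite (sends_to1 sy) // in_setC.
case: (rownB j) => [|z0|[t _ st]]; rewrite ?in_setC //; first by rewrite z0 ?in_setC.
have /sends_toP -> : sends_to D (~: B) j t := st; rewrite ?in_setC //.
case: eqP => // zt; rewrite -zt in st.
by rewrite (injnB j y z) ?in_setC ?eqxx in jy.
Qed.

Lemma row_notY j i : j \notin B -> j \notin Y -> i \notin B -> D j i = 0.
Proof.
move=> jB jY iB; apply/eqP; apply: contraNT jY => Dji.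
by rewrite inE in_setC jB; apply/existsP; exists i; rewrite in_setC iB.
Qed.

Lemma row_Z z i : z \in Z -> D z i != 0 -> i \in R.
Proof.
move=> /memZ[zB [y yB sy]] Dzi; move/eqP: (isMAB_sqr y i MD).
have /sends_toP sy' := sy.
have -> : \sum_k D y k * D k i = \sum_(k in B) D y k * D k i + D z i.
  rewrite (bigID (mem B)) /=; congr (_ + _).
  rewrite (bigD1 z) //= sy' ?in_setC // eqxx mul1r big1 ?addr0 //.
  by move=> k /andP[kB kz]; rewrite sy' ?in_setC // (negbTE kz) mul0r.
rewrite addr_eq0 => /eqP sumB.
have /sum_neq0[k [kB]] : \sum_(k in B) D y k * D k i != 0 by rewrite sumB oppr_eq0.
rewrite mulf_eq0 negb_or => /andP[_ Dki].
case: (row_inB kB) => [z0|[t tR Dk]]; first by rewrite z0 eqxx in Dki.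
by move: Dki; rewrite Dk => /eq_nat_neq0 ->.
Qed.

Lemma coef_Y (u : 'rV[E]_N) y : (u *m D <= chiS E B)%MS -> y \in Y -> u 0 y = 0.
Proof.
move=> /chiSP uD /memY[yB [z zB sy]]; move: (uD z zB); rewrite mxE.
rewrite (eq_bigr (fun k => (k == y)%:R * u 0 y)) ?sum_delta_mull // => k _.
by rewrite (col_Z yB sy zB); case: eqP => [->|]; rewrite ?mulr1 ?mul1r ?mulr0 ?mul0r.
Qed.

Lemma row_X x i : x \in X -> D x i != 0 -> i \in R \/ i \in P.
Proof.
move=> xX Dxi; have iB : i \in B by apply: contraT => iB; rewrite Xset_row0 ?eqxx in Dxi.
have [iR|iR] := boolP (i \in R); [by left | right; rewrite PsetE iB iR andbT].
apply: contra Dxi => iQ; apply/eqP; have [[D2 _ _] _] := MD.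
have -> : D x i = row x D 0 i by rewrite mxE.
rewrite coef_Q // => [j jB|]; first by rewrite mxE Xset_row0.
by rewrite -row_mul D2 row0.
Qed.

Lemma classify_entry j i : j \notin Y -> D j i != 0 -> i \in R \/ (j \in X /\ i \in P).
Proof.
move=> jY Dji; have [jB|jB] := boolP (j \in B).
  case: (row_inB jB) => [z|[t tR Dj]]; first by rewrite z eqxx in Dji.
  by left; move: Dji; rewrite Dj => /eq_nat_neq0 ->.
have [jZ|jZ] := boolP (j \in Z); first by left; apply: row_Z jZ Dji.
have jX : j \in X by rewrite XsetE jB jY.
by case: (row_X jX Dji) => ?; [left|right].
Qed.

Lemma unit_target r : r \in R -> (unitv r <= chiS E B *m D)%MS.
Proof.
move=> /memR[rB [q qB sq]]; suff -> : unitv r = unitv q *m D by rewrite submxMr ?unit_chiS.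
by apply/rowP => i; rewrite unitvE -rowE mxE (row_source qB sq rB).
Qed.

Lemma paired_row x p : x \in X -> p \in P -> D x p != 0 ->
  (row x D - unitv p <= chiS E B *m D)%MS.
Proof.
move=> xX pP Dxp; have [_ _ uniqP oneP _] := qD.
apply: sub_unitv => i; rewrite !mxE eqxx.
have [->|ip] := eqVneq i p; first by rewrite (oneP x p) // subrr eqxx.
rewrite subr0 => Dxi; case: (row_X xX Dxi) => [/unit_target //|iP].
by rewrite (uniqP x i p) ?eqxx in ip.
Qed.

Lemma unit_paired x p : x \in X -> p \in P -> D x p != 0 -> (unitv p <= D)%MS.
Proof.
move=> xX pP /(paired_row xX pP)/submx_trans/(_ (submxMl _ _)) sub_w.
have -> : unitv p = row x D - (row x D - unitv p) by rewrite opprB addrC subrK.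
by rewrite addmx_sub ?row_sub // eqmx_opp.
Qed.

Lemma conn_im_support v i : (v <= conn_im B D)%MS -> v 0 i != 0 ->
  i \in R \/ (i \in P /\ paired D i).
Proof.
rewrite /conn_im sub_capmx => /andP[/submxP[u ->] uD] /mulmx_coef_neq0[j [uj Dji]].
have jY : j \notin Y by apply: contra uj => jY; rewrite (coef_Y uD jY) eqxx.
case: (classify_entry jY Dji) => [|[jX iP]]; first by left.
by right; split=> //; apply/existsP; exists j; rewrite jX.
Qed.

Lemma iota_im_support S v i : S \subset B -> (v <= iota_im B D S)%MS -> v 0 i != 0 ->
  i \in R \/ (i \in P /\ i \in S).
Proof.
move=> SB /sub_addsmxP[[u1 u2] /= ->]; set c := u1 *m _.
have : (c <= kermx D :&: chiS E S)%MS by apply: submxMl.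
rewrite sub_capmx sub_kermx => /andP[/eqP cD /chiSP cS].
rewrite mxE; have [ci|ci _] := eqVneq (c 0 i) 0.
  rewrite ci add0r mulmxA => /mulmx_coef_neq0[j [uj Dji]].
  have jB : j \in B.
    by apply: contraT => jB; move: uj; have /chiSP -> := submxMl u2 (chiS E B); rewrite ?eqxx.
  case: (row_inB jB) => [z|[t tR Dj]]; first by rewrite z eqxx in Dji.
  by left; move: Dji; rewrite Dj => /eq_nat_neq0 ->.
have iS : i \in S by apply: contraT => /cS ci0; rewrite ci0 eqxx in ci.
have [iR|iR] := boolP (i \in R); [by left | right; split=> //].
rewrite PsetE (subsetP SB i iS) iR andbT; apply: contra ci => iQ; apply/eqP.
by apply: (coef_Q _ cD iQ) => i' i'B; apply: cS; apply: contra i'B; apply: (subsetP SB).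
Qed.

Lemma Ispace_chiS S : S \subset B -> (Ispace B D S :=: chiS E (Ispace_support D S))%MS.
Proof.
move=> SB; apply: eqmx_chiS => [v|t].
  rewrite /Ispace sub_capmx => /andP[vI vC] i vi; rewrite inE.
  case: (iota_im_support SB vI vi) => [->//|[iP iS]].
  by case: (conn_im_support vC vi) => [->//|[_ ->]]; rewrite iP iS orbT.
rewrite inE => /orP[tR | /and3P[tP tS /existsP[x /andP[xX Dxt]]]];
  rewrite /Ispace /iota_im /conn_im !sub_capmx.
  have [tB _] := memR tR; have tI := unit_target tR.
  by rewrite (submx_trans tI (addsmxSr _ _)) (submx_trans tI (submxMl _ _)) unit_chiS.
rewrite (unit_paired xX tP Dxt) unit_chiS (Pset_sub tP) !andbT.
apply: submx_trans (addsmxSl _ _); rewrite sub_capmx sub_kermx unit_chiS tS andbT.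
by apply/eqP/rowP => i; rewrite -rowE !mxE (Pset_row0 _ MD tP).
Qed.

Lemma Ispace_support_step b : b \in B ->
  (Ispace_support D [set c in B | (c <= b)%N] == Ispace_support D [set c in B | (c < b)%N])
  = ~~ ((b \in P) && paired D b).
Proof.
move=> bB; set S1 := [set c in B | _]; set S0 := [set c in B | _].
have memS1 i : (i \in S1) = (i \in B) && (i <= b)%N by rewrite inE.
have memS0 i : (i \in S0) = (i \in B) && (i < b)%N by rewrite inE.
have memI S' i : (i \in Ispace_support D S') = (i \in R) || [&& i \in P, i \in S' & paired D i].
  by rewrite in_set.
apply/eqP/idP => [/setP/(_ b)|bnot].
  rewrite !memI memS1 memS0 bB leqnn ltnn /= andbF orbF.
  by move=> eqb; apply/negP => /andP[bP pb]; move: eqb; rewrite (negbTE (Pset_notR bP)) bP pb.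
apply/setP => i; rewrite !memI memS1 memS0.
have [->|ib] := eqVneq i b.
  by rewrite bB leqnn ltnn /= andbF orbF (negbTE bnot) orbF.
have ib' : (i : nat) != b by [].
by rewrite leq_eqVlt (negbTE ib').
Qed.

Lemma Hset_quasi b : b \in Hset B D <-> (b \in P /\ exists x, x \in X /\ D x b != 0).
Proof.
rewrite inE /essential; have [bB|bB] /= := boolP (b \in B); last first.
  by split=> // [[/Pset_sub bB']]; rewrite bB' in bB.
have sub_B (lt : rel nat) : [set c in B | lt c b] \subset B.
  by apply/subsetP => c; rewrite inE => /andP[].
rewrite (eqmx_eq_congr (Ispace_chiS (sub_B leq)) (Ispace_chiS (sub_B ltn))).
rewrite eqmx_chiS_set Ispace_support_step // negbK; split=> [/andP[bP /existsP[x /andP[xX Dxb]]]|].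
  by split=> //; exists x.
by case=> bP [x [xX Dxb]]; rewrite bP; apply/existsP; exists x; rewrite xX.
Qed.

Lemma pivot_cycle_inB m : is_pivot (cycle_inB D) m <-> (m \in P) || (m \in R).
Proof.
apply: (is_pivot_support (T := fun m => (m \in P) || (m \in R)))
  => [v [/chiSP vB vD] i vi|t tPR].
  have iB : i \in B by apply: contraT => /vB vi0; rewrite vi0 eqxx in vi.
  apply/orP; have [iR|iR] := boolP (i \in R); [by right | left].
  rewrite PsetE iB iR andbT /=.
  by apply: contra vi => iQ; rewrite (coef_Q vB vD iQ).
have tB : t \in B by case/orP: tPR => [/Pset_sub|/memR[]].
split; first by rewrite unit_chiS.
apply/rowP => i; rewrite -rowE !mxE.
by case/orP: tPR => [/(Pset_row0 _ MD)|/row_target] ->.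
Qed.

Lemma pivot_maps_intoB m : is_pivot (maps_intoB D) m <-> m \notin Y.
Proof.
apply: (is_pivot_support (T := fun m => m \notin Y)) => [v vD i|t tY].
  by apply: contraNN => /(coef_Y vD) ->.
rewrite /maps_intoB -rowE; apply/chiSP => i iB; rewrite mxE.
have [tB|tB] := boolP (t \in B); last exact: row_notY.
by apply/eqP; apply: contraNT iB; apply: isMAB_B MD tB.
Qed.

Lemma pivot_boundary_plusB m : is_pivot (boundary_plusB D) m <-> (m \in B) || (m \in Z).
Proof.
apply: (is_pivot_support (T := fun m => (m \in B) || (m \in Z)))
  => [v [u [w [/chiSP wB ->]]] i|t /orP[tB|tZ]].
- rewrite mxE; have [//|iB] := boolP (i \in B); rewrite wB // addr0 => /mulmx_coef_neq0[j [_ Dji]].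
  have jB : j \notin B by apply: contra iB => jB; apply: isMAB_B MD jB Dji.
  have jY : j \in Y by apply: contraT => jY; rewrite row_notY ?eqxx in Dji.
  have [_ [z zB /sends_toP sz]] := memY jY.
  move: Dji; rewrite sz ?in_setC // => /eq_nat_neq0 ->.
  by rewrite inE in_setC zB; apply/existsP; exists j; rewrite in_setC jB; apply/sends_toP.
- by exists 0, (unitv t); rewrite mul0mx add0r unit_chiS.
have [tB [y yB sy]] := memZ tZ.
exists (unitv y), (unitv t - unitv y *m D); split; last by rewrite addrC subrK.
apply/chiSP => i iB; rewrite -rowE !mxE eqxx /=.
by have /sends_toP -> := sy; rewrite ?subrr ?in_setC.
Qed.

Lemma boundaryB_factor w : (w <= chiS E B *m D)%MS ->
  exists2 u', (u' <= chiS E B)%MS & w = u' *m D.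
Proof. by case/submxP => a ->; exists (a *m chiS E B); rewrite ?submxMl ?mulmxA. Qed.

Lemma pivot_filtered_boundary (k : nat) m : is_pivot (filtered_boundary D k) m <->
  (m \in R) || (m \in P) && [exists x in X, (x < k)%N && (D x m != 0)].
Proof.
apply: (is_pivot_support
  (T := fun m => (m \in R) || (m \in P) && [exists x in X, (x < k)%N && (D x m != 0)]))
  => [v [u [u' [uF uB /chiSP u'B ->]]] i|t].
  rewrite mxE; have [->|] := eqVneq ((u' *m D) 0 i) 0; last first.
    case/mulmx_coef_neq0 => j [u'j Dji].
    have jB : j \in B by apply: contraT => /u'B u'j0; rewrite u'j0 eqxx in u'j.
    case: (row_inB jB) => [z|[r rR Dj]]; first by rewrite z eqxx in Dji.
    by move: Dji; rewrite Dj => /eq_nat_neq0 ->; rewrite rR.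
  rewrite addr0 => /mulmx_coef_neq0[j [uj Dji]].
  have jY : j \notin Y by apply: contra uj => jY; rewrite (coef_Y uB jY) eqxx.
  have jk : (j < k)%N.
    by move/chiSP: uF => uF; apply: contraT => jk; rewrite uF ?eqxx ?inE in uj.
  case: (classify_entry jY Dji) => [->//|[jX iP]].
  by apply/orP; right; rewrite iP; apply/existsP; exists j; rewrite jX jk.
case/orP=> [/unit_target/boundaryB_factor[u' u'B ->]|/andP[tP /existsP[x /and3P[xX xk Dxt]]]].
  by exists 0, u'; split; rewrite ?mul0mx ?add0r ?sub0mx.
have [u' u'B eu'] := boundaryB_factor (paired_row xX tP Dxt).
exists (unitv x), (- u'); split.
- by rewrite unit_chiS inE.
- by rewrite -rowE; apply/chiSP => i iB; rewrite mxE Xset_row0.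
- by rewrite eqmx_opp.
by rewrite -rowE mulNmx -eu' opprB addrC subrK.
Qed.

Lemma Xset_pivots x : x \in X <-> is_pivot (maps_intoB D) x /\ ~ is_pivot (boundary_plusB D) x.
Proof.
rewrite pivot_maps_intoB pivot_boundary_plusB XsetE.
split=> [/and3P[xB xY xZ]|[xY /negP/norP[xB xZ]]]; last by rewrite xB xY xZ.
by split=> //; apply/negP/norP.
Qed.

Lemma Pset_pivots p :
  p \in P <-> is_pivot (cycle_inB D) p /\ ~ is_pivot (filtered_boundary D 0) p.
Proof.
rewrite pivot_cycle_inB pivot_filtered_boundary; split=> [pP|[/orP[//|pR] []]].
  split; first by rewrite pP.
  by rewrite (negbTE (Pset_notR pP)) /= => /andP[_ /existsP[x]]; rewrite andbF.
by rewrite pR.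
Qed.

Lemma paired_pivots x p : x \in X -> p \in P -> D x p != 0 <->
  is_pivot (filtered_boundary D x.+1) p /\ ~ is_pivot (filtered_boundary D x) p.
Proof.
move=> xX pP; have [_ _ _ _ injX] := qD.
rewrite !pivot_filtered_boundary (negbTE (Pset_notR pP)) pP /=.
split=> [Dxp|[/existsP[x' /and3P[x'X x'x Dx'p]] notx]].
  split; first by apply/existsP; exists x; rewrite xX ltnSn.
  by case/existsP=> x' /and3P[x'X x'x Dx'p]; rewrite (injX p x' x) ?ltnn in x'x.
move: x'x; rewrite ltnS leq_eqVlt => /orP[/eqP/val_inj <- //|x'x].
by case: notx; apply/existsP; exists x'; rewrite x'X x'x.
Qed.

End QuasiElementary.

Lemma pairing_invariant D D1 : isMAB deg B D -> isMAB deg B D1 ->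
  quasi_elem B D -> quasi_elem B D1 -> ABequiv deg B D D1 ->
  forall x p, x \in Xset B D -> p \in Pset B D -> (D x p != 0 <-> D1 x p != 0).
Proof.
move=> MD MD1 qD qD1 [G [uG triG degG BG eqD1]] x p xX pP.
have mapG : ABmap G by split.
have pivots V V' := is_pivot_mulmx triG uG (V := V) (V' := V').
rewrite eqD1 in MD1 qD1 *.
have xX1 : x \in Xset B (invmx G *m D *m G).
  apply/(Xset_pivots MD1 qD1).
  rewrite (pivots _ _ (maps_intoB_conj D mapG uG)).
  rewrite (pivots _ _ (boundary_plusB_conj D mapG uG)).
  exact/(Xset_pivots MD qD).
have pP1 : p \in Pset B (invmx G *m D *m G).
  apply/(Pset_pivots MD1 qD1).
  rewrite (pivots _ _ (cycle_inB_conj D mapG uG)).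
  rewrite (pivots _ _ (filtered_boundary_conj D mapG uG 0%N)).
  exact/(Pset_pivots MD qD).
rewrite (paired_pivots MD qD xX pP) (paired_pivots MD1 qD1 xX1 pP1).
by rewrite !(pivots _ _ (filtered_boundary_conj D mapG uG _)).
Qed.

End Differentials.

Theorem lemma3p4 (E : fieldType) (N : nat) (deg : 'I_N -> int) (B : {set 'I_N}) :
  (* (1) *)
  (forall D : 'M[E]_N, isMAB deg B D ->
     exists D' : 'M[E]_N,
       [/\ isMAB deg B D', ABequiv deg B D D' & quasi_elem B D']) /\
  (* (2) *)
  (forall D : 'M[E]_N, isMAB deg B D -> quasi_elem B D ->
     forall b : 'I_N,
       b \in Hset B D <->
       (b \in Pset B D /\ exists x, x \in Xset B D /\ D x b != 0)) /\
  (* (3) *)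
  (forall D D1 : 'M[E]_N, isMAB deg B D -> isMAB deg B D1 ->
     quasi_elem B D -> quasi_elem B D1 -> ABequiv deg B D D1 ->
     forall x p : 'I_N, x \in Xset B D -> p \in Pset B D ->
       (D x p != 0 <-> D1 x p != 0)).
Proof.
split; first exact: quasi_elementary_form.
split; first exact: Hset_quasi.
exact: pairing_invariant.
Qed.
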